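(* For $i=1,\dots,n$ let $X_i=\{0,\dots,m_i-1\}$ and let $P_i$ be an irreducible stochastic matrix on $X_i$ in detailed balance with a strictly positive probability measure $\sigma_i$, where $\sigma_i$ is uniform for every $i\ge2$. Let $p^0_1,\dots,p^0_n>0$ sum to $1$ and $P=\sum_{i=1}^np^0_i(I_1\otimes\cdots\otimes I_{i-1}\otimes P_i\otimes J_{i+1}\otimes\cdots\otimes J_n)$. For each $i$ let $U_i$ be real, $\Delta_i$ real diagonal and $D_i=\mathrm{diag}(\sigma_i(0),\dots,\sigma_i(m_i-1))$ with $P_iU_i=U_i\Delta_i$, $U_i^TD_iU_i=I$, the column of $U_i$ indexed by $0$ equal to the all-ones vector and $(\Delta_i)_{00}=1$. Set $$U=U_1\otimes A_2\otimes\cdots\otimes A_n+\sum_{k=2}^nI_1^{\sigma_1\text{-norm}}\otimes\cdots\otimes I_{k-1}^{\sigma_{k-1}\text{-norm}}\otimes(U_k-A_k)\otimes A_{k+1}\otimes\cdots\otimes A_n,$$ $$D=\bigotimes_{i=1}^nD_i,\qquad \Delta=\sum_{i=1}^np^0_i(I_1\otimes\cdots\otimes I_{i-1}\otimes\Delta_i\otimes J^{\mathrm{diag}}_{i+1}\otimes\cdots\otimes J^{\mathrm{diag}}_n).$$ Then $PU=U\Delta$ and $U^TDU=I$.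
   Context: $I_i$ is the $m_i\times m_i$ identity, $J_i$ the $m_i\times m_i$ matrix with all entries $1/m_i$, $I_i^{\sigma_i\text{-norm}}=\mathrm{diag}(\sigma_i(0)^{-1/2},\dots,\sigma_i(m_i-1)^{-1/2})$, $A_i$ the $m_i\times m_i$ matrix whose column $0$ consists of ones and all other entries are $0$, and $J^{\mathrm{diag}}_i=\mathrm{diag}(1,0,\dots,0)$. Kronecker products are indexed lexicographically: $(A\otimes B)_{(x,x'),(y,y')}=A_{x,y}B_{x',y'}$. *)

From HB Require Import structures.
From mathcomp Require Import all_boot all_order all_algebra.
From mathcomp Require Import reals.
Set Implicit Arguments. Unset Strict Implicit. Unset Printing Implicit Defensive.
Import Order.TTheory GRing.Theory Num.Theory.
Local Open Scope ring_scope.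

(* Index set X_1 x ... x X_n, factors indexed 0-based by 'I_n, X_i = 'I_(m i). *)
Definition prodIdx (n : nat) (m : 'I_n -> nat) : finType :=
  {dffun forall i : 'I_n, 'I_(m i)}.

Section Defs.
Variables (R : realType) (n : nat) (m : 'I_n -> nat).
Local Notation X := (prodIdx m).

Definition mulX (A B : X -> X -> R) : X -> X -> R :=
  fun x z => \sum_(y : X) A x y * B y z.
Definition trX (A : X -> X -> R) : X -> X -> R := fun x y => A y x.
Definition idX : X -> X -> R := fun x y => (x == y)%:R.

(* Entry (x,y) of the Kronecker product
   B_0 (x) ... (x) B_(i-1) (x) M (x) C_(i+1) (x) ... (x) C_(n-1). *)
Definition kron_at (i : 'I_n) (B : forall j : 'I_n, 'M[R]_(m j))
  (M : 'M[R]_(m i)) (C : forall j : 'I_n, 'M[R]_(m j)) : X -> X -> R :=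
  fun x y => (\prod_(j : 'I_n | (j < i)%N) B j (x j) (y j)) * M (x i) (y i)
             * \prod_(j : 'I_n | (i < j)%N) C j (x j) (y j).

Definition kron (F : forall j : 'I_n, 'M[R]_(m j)) : X -> X -> R :=
  fun x y => \prod_(j : 'I_n) F j (x j) (y j).
Arguments kron_at i B M C : clear implicits.

Definition Imx (j : 'I_n) : 'M[R]_(m j) := 1%:M.
Definition Jmx (j : 'I_n) : 'M[R]_(m j) := const_mx (m j)%:R^-1.
Definition Amx (j : 'I_n) : 'M[R]_(m j) :=
  \matrix_(x, y) (nat_of_ord y == 0%N)%:R.
Definition Jdiag (j : 'I_n) : 'M[R]_(m j) :=
  \matrix_(x, y) ((nat_of_ord x == 0%N) && (nat_of_ord y == 0%N))%:R.
Definition Inorm (sigma : forall j : 'I_n, 'I_(m j) -> R) (j : 'I_n)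
  : 'M[R]_(m j) := \matrix_(x, y) ((x == y)%:R * (Num.sqrt (sigma j x))^-1).
Definition Dmx (sigma : forall j : 'I_n, 'I_(m j) -> R) (j : 'I_n)
  : 'M[R]_(m j) := \matrix_(x, y) ((x == y)%:R * sigma j x).

Definition stochastic k (Q : 'M[R]_k) : Prop :=
  (forall x y, 0 <= Q x y) /\ (forall x, \sum_y Q x y = 1).
Definition mxpow k (Q : 'M[R]_k) (t : nat) : 'M[R]_k := iter t (mulmx Q) 1%:M.
Definition irreducible k (Q : 'M[R]_k) : Prop :=
  forall x y, exists t, 0 < mxpow Q t x y.
Definition detailed_balance k (Q : 'M[R]_k) (s : 'I_k -> R) : Prop :=
  forall x y, s x * Q x y = s y * Q y x.

Definition Pbig (p : 'I_n -> R) (P : forall j : 'I_n, 'M[R]_(m j)) : X -> X -> R :=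
  fun x y => \sum_(i : 'I_n) p i * kron_at i Imx (P i) Jmx x y.

(* U = U_1 (x) A_2 .. (x) A_n
       + sum_(k>=2) Inorm_1 (x) .. (x) Inorm_(k-1) (x) (U_k - A_k) (x) A_(k+1) .. A_n
   (0-based: the term k = 0 has no Inorm factors and uses U_0 itself). *)
Definition Ubig (sigma : forall j : 'I_n, 'I_(m j) -> R)
  (U : forall j : 'I_n, 'M[R]_(m j)) : X -> X -> R :=
  fun x y => \sum_(k : 'I_n)
    kron_at k (Inorm sigma) (if nat_of_ord k == 0%N then U k else U k - Amx k) Amx x y.

Definition Dbig (sigma : forall j : 'I_n, 'I_(m j) -> R) : X -> X -> R :=
  kron (Dmx sigma).

Definition Deltabig (p : 'I_n -> R) (Delta : forall j : 'I_n, 'M[R]_(m j))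
  : X -> X -> R :=
  fun x y => \sum_(i : 'I_n) p i * kron_at i Imx (Delta i) Jdiag x y.

End Defs.

Arguments mulX {R n m} A B x z.
Arguments trX {R n m} A x y.
Arguments idX {R n m} x y.
Arguments Pbig {R n m} p P x y.
Arguments Ubig {R n m} sigma U x y.
Arguments Dbig {R n m} sigma x y.
Arguments Deltabig {R n m} p Delta x y.
Arguments Dmx {R n m} sigma j.

(* Every matrix in sight is a linear combination of Kronecker products, and
   Kronecker products multiply factorwise.  The columns of U_k - A_k have sigma_k-mean zero, and sigma_k is
   uniform for k >= 2, so J (U_k - A_k) = 0 = (U_k - A_k) J^diag: the terms
   of P U and U Delta indexed by (i, k) with i < k vanish, and all others agree
   factor by factor since P_i A = A Delta_i and J A = A J^diag.  In U^T D U the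
   cross terms vanish because A^T D (U_k - A_k) = 0, while the k-th diagonal
   term has Gram factors I before k, I - J^diag at k and J^diag after k; these
   telescope to I (x) ... (x) I. *)

From HB Require Import structures.
From mathcomp Require Import all_boot all_order all_algebra.
From mathcomp Require Import reals ring.
Import Order.TTheory GRing.Theory Num.Theory.
Local Open Scope ring_scope.

Lemma sum_prodIdx_prod {R : comPzSemiRingType} {n : nat} {m : 'I_n -> nat}
  (F : forall j : 'I_n, 'I_(m j) -> R) :
  \sum_(z : prodIdx m) \prod_j F j (z j) = \prod_j \sum_(a : 'I_(m j)) F j a.
Proof.
pose T j : finType := 'I_(m j).
pose G j : {ffun T j -> R} := [ffun a => F j a].
rewrite (reindex (@dffun_of_fprod _ T)) /=; last exact/onW_bij/dffun_of_fprod_bij.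
transitivity (\sum_(t : fprod T) \prod_(j in 'I_n) G j (t j)).
  by apply: eq_bigr => t _; apply: eq_bigr => j _; rewrite !ffunE.
rewrite big_fprod.
under [RHS]eq_bigr => j _ do rewrite (big_tag (fun j (a : T j) => F j a)).
rewrite bigA_distr_big_dep; apply: eq_bigr => g _; apply: eq_bigr => j _.
by rewrite /untag; case: eqP => // e; rewrite ffunE.
Qed.

Lemma sum_prod_telescope {R : comPzRingType} {n : nat} (d e : 'I_n -> R) :
  (0 < n)%N ->
  \sum_(k < n) \prod_(j < n)
      (if (j < k)%N then d j else if (k < j)%N then e j
       else if k == 0 :> nat then d j else d j - e j)
    = \prod_(j < n) d j.
Proof.
move=> n_gt0.
(* [t 0] is [0] rather than [\prod e], so that the [k = 0] term is [t 1 - t 0] too. *)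
pose t s := if s is 0 then 0 else \prod_(j < n) (if (j < s)%N then d j else e j).
transitivity (\sum_(k < n) (t k.+1 - t k)).
  apply: eq_bigr => k _; case: (nat_of_ord k =P 0%N) => [k0 | k_neq0].
    rewrite /t k0 subr0; apply: eq_bigr => j _; by case: (nat_of_ord j).
  have -> : t k = \prod_(j < n) (if (j < k)%N then d j else e j).
    by rewrite /t; case: (nat_of_ord k) k_neq0.
  have off_k j : j != k ->
      (if (j < k)%N then d j else if (k < j)%N then e j else d j - e j)
      = if (j < k)%N then d j else e j.
    by move=> j_neq_k; case: ltngtP => // /val_inj/eqP; rewrite (negPf j_neq_k).
  rewrite (bigD1 k) // [X in _ = X - _](bigD1 k) // [X in _ = _ - X](bigD1 k) //=.
  rewrite ltnn ltnSn mulrBl; congr (_ * _ - _ * _); apply: eq_bigr => j j_neq_k.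
    rewrite off_k // [(j < k.+1)%N]ltnS [(j <= k)%N]leq_eqVlt.
    by rewrite -[_ == _ :> nat]/(j == k) (negPf j_neq_k).
  exact: off_k.
rewrite -(big_mkord xpredT (fun k => t k.+1 - t k)) telescope_sumr // /t subr0.
clear t; move: n_gt0; case: n d e => [//|n] d e _.
by apply: eq_bigr => j _; rewrite ltn_ord.
Qed.

Lemma sum_indicator0_mul {R : pzSemiRingType} {k : nat} (f : 'I_k -> R)
    (k_gt0 : (0 < k)%N) :
  \sum_c ((nat_of_ord c == 0%N)%:R * f c) = f (Ordinal k_gt0).
Proof.
rewrite (bigD1 (Ordinal k_gt0)) //= mul1r big1 ?addr0 // => c c_neq0.
by rewrite -val_eqE /= in c_neq0; rewrite (negPf c_neq0) mul0r.
Qed.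

Lemma sum_ord_inv_const {R : numFieldType} (k : nat) (v : R) :
  (0 < k)%N -> \sum_(c < k) k%:R^-1 * v = v.
Proof.
move=> k_gt0; rewrite sumr_const card_ord -mulrnAl -mulr_natr mulVf ?mul1r //.
by rewrite pnatr_eq0 -lt0n.
Qed.

Section KroneckerCalculus.
Context {R : realType} {n : nat} {m : 'I_n -> nat}.
Local Notation X := (prodIdx m).
Local Notation family := (forall j : 'I_n, 'M[R]_(m j)).

Definition kron_sel (i : 'I_n) (B F C : family) : family :=
  fun j => if (j < i)%N then B j else if (i < j)%N then C j else F j.

Lemma kron_sel_lt {i : 'I_n} {B F C : family} {j : 'I_n} :
  (j < i)%N -> kron_sel i B F C j = B j.
Proof. by rewrite /kron_sel => ->. Qed.

Lemma kron_sel_gt {i : 'I_n} {B F C : family} {j : 'I_n} :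
  (i < j)%N -> kron_sel i B F C j = C j.
Proof. by move=> lt_ij; rewrite /kron_sel ltnNge (ltnW lt_ij) lt_ij. Qed.

Lemma kron_sel_id (i : 'I_n) (B F C : family) : kron_sel i B F C i = F i.
Proof. by rewrite /kron_sel ltnn. Qed.

Lemma kron_atE (i : 'I_n) (B F C : family) (x y : X) :
  @kron_at R n m i B (F i) C x y = kron (kron_sel i B F C) x y.
Proof.
rewrite /kron_at /kron [RHS](bigD1 i) //= kron_sel_id.
rewrite [in RHS](bigID (fun j : 'I_n => (j < i)%N)) /= [RHS]mulrCA [RHS]mulrA.
congr (_ * _ * _).
  apply: eq_big => [j | j lt_ji]; last by rewrite kron_sel_lt.
  by rewrite -val_eqE /=; case: ltngtP.
apply: eq_big => [j | j lt_ij]; last by rewrite kron_sel_gt.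
by rewrite -val_eqE /=; case: ltngtP.
Qed.

Lemma kron_trX (F : family) (x y : X) : trX (kron F) x y = kron (fun j => (F j)^T) x y.
Proof. by apply: eq_bigr => j _; rewrite mxE. Qed.

Lemma mulX_kron (F G : family) (x y : X) :
  mulX (kron F) (kron G) x y = kron (fun j => F j *m G j) x y.
Proof.
rewrite /mulX /kron; under eq_bigr => z _ do rewrite -big_split /=.
rewrite (sum_prodIdx_prod (fun j c => F j (x j) c * G j c (y j))).
by apply: eq_bigr => j _; rewrite mxE.
Qed.

Lemma mulX_kron_sums {I K : finType} {a : I -> R} {b : K -> R}
    {F : I -> family} {G : K -> family} {f g : X -> X -> R} :
  (forall x y, f x y = \sum_i a i * kron (F i) x y) ->
  (forall x y, g x y = \sum_k b k * kron (G k) x y) ->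
  forall x y, mulX f g x y
    = \sum_i \sum_k a i * b k * kron (fun j => F i j *m G k j) x y.
Proof.
move=> fE gE x y; rewrite /mulX.
under eq_bigr => z _ do rewrite fE gE big_distrl /=.
rewrite exchange_big; apply: eq_bigr => i _.
under eq_bigr => z _ do rewrite big_distrr /=.
rewrite exchange_big; apply: eq_bigr => k _.
rewrite -mulX_kron /mulX mulr_sumr; apply: eq_bigr => z _; ring.
Qed.

Lemma kron_eq0 {F : family} (j : 'I_n) {x y : X} : F j = 0 -> kron F x y = 0.
Proof. by move=> Fj0; rewrite /kron (bigD1 j) //= Fj0 mxE mul0r. Qed.

Lemma idX_kron (x y : X) : idX x y = kron (Imx R m) x y.
Proof.
rewrite /idX /kron; under eq_bigr => j _ do rewrite mxE.
have [-> | x_neq_y] := eqVneq x y; first by rewrite big1 // => j _; rewrite eqxx.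
have /existsP[j x_neq_y_at_j] : [exists j, x j != y j].
  rewrite -negb_forall; apply: contra x_neq_y => /forallP eq_xy.
  by apply/eqP/ffunP => j; exact/eqP.
by rewrite (bigD1 j) //= (negPf x_neq_y_at_j) mul0r.
Qed.

End KroneckerCalculus.

Section FactorIdentities.
Context {R : realType} {n : nat} {m : 'I_n -> nat}.
Context {sigma : forall j : 'I_n, 'I_(m j) -> R} {j : 'I_n}.
Local Notation A := (Amx R m j).
Local Notation D := (Dmx sigma j).
Local Notation J := (Jmx R m j).
Local Notation Jd := (Jdiag R m j).
Local Notation e0 a := ((nat_of_ord a == 0%N)%:R : R).

Lemma JdiagE a b : Jd a b = e0 a * e0 b.
Proof. by rewrite mxE -natrM mulnb. Qed.

Lemma Dmx_formE (M N : 'M[R]_(m j)) a b :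
  (M^T *m D *m N) a b = \sum_c M c a * sigma j c * N c b.
Proof.
rewrite mxE; apply: eq_bigr => c _; rewrite mxE; congr (_ * _).
rewrite (bigD1 c) //= big1 => [|d /negPf d_neq_c]; last by rewrite !mxE d_neq_c !mul0r mulr0.
by rewrite !mxE eqxx mul1r addr0.
Qed.

Lemma Inorm_orthonormal : (forall x, 0 < sigma j x) ->
  (Inorm sigma j)^T *m D *m Inorm sigma j = 1%:M.
Proof.
move=> sigma_gt0; apply/matrixP => a b; rewrite Dmx_formE mxE.
rewrite (bigD1 a) //= big1 => [|c /negPf c_neq_a]; last by rewrite !mxE c_neq_a !mul0r.
rewrite !mxE eqxx addr0 !mul1r -{2}[sigma j a](sqr_sqrtr (ltW (sigma_gt0 a))).
have : Num.sqrt (sigma j a) != 0 by rewrite gt_eqF // sqrtr_gt0.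
by set s := Num.sqrt _ => s_neq0; field.
Qed.

Lemma Amx_gram : \sum_x sigma j x = 1 -> A^T *m D *m A = Jd.
Proof.
move=> sum_sigma; apply/matrixP => a b.
rewrite Dmx_formE JdiagE -[RHS]mulr1 -[X in _ * X]sum_sigma mulr_sumr.
by apply: eq_bigr => c _; rewrite !mxE; ring.
Qed.

Lemma Jmx_mul_Amx : J *m A = A *m Jd.
Proof.
apply/matrixP => a b; have k_gt0 : (0 < m j)%N by apply: leq_ltn_trans (ltn_ord a).
rewrite !mxE; under eq_bigr => c _ do rewrite !mxE.
under [RHS]eq_bigr => c _ do rewrite [A _ _]mxE.
by rewrite (sum_indicator0_mul (fun c => Jd c b) k_gt0) JdiagE mul1r sum_ord_inv_const.
Qed.

Lemma stochastic_mul_Amx {Q Delta : 'M[R]_(m j)} :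
  stochastic Q -> is_diag_mx Delta ->
  (forall y, nat_of_ord y = 0%N -> Delta y y = 1) ->
  Q *m A = A *m Delta.
Proof.
move=> Q_stoch Delta_diag Delta00; apply/matrixP => a b.
have k_gt0 : (0 < m j)%N by apply: leq_ltn_trans (ltn_ord a).
rewrite !mxE; under eq_bigr => c _ do rewrite !mxE.
under [RHS]eq_bigr => c _ do rewrite [A _ _]mxE.
rewrite -mulr_suml Q_stoch.2 mul1r (sum_indicator0_mul (fun c => Delta c b) k_gt0).
case: (nat_of_ord b =P 0%N) => [b0 | b_neq0].
  by rewrite (_ : b = Ordinal k_gt0) ?Delta00 //; apply: val_inj.
by rewrite (is_diag_mxP Delta_diag) //; apply/eqP => eq_0b; apply: b_neq0; rewrite -eq_0b.
Qed.

Section Centered.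
Context {U : 'M[R]_(m j)}.
Hypotheses (U_orthonormal : U^T *m D *m U = 1%:M)
  (U_col0 : forall x y, nat_of_ord y = 0%N -> U x y = 1).

Lemma sum_sigma_U b : \sum_c sigma j c * U c b = e0 b.
Proof.
have k_gt0 : (0 < m j)%N by apply: leq_ltn_trans (ltn_ord b).
have := congr1 (fun M : 'M[R]_(m j) => M (Ordinal k_gt0) b) U_orthonormal.
rewrite Dmx_formE mxE -val_eqE /= eq_sym => <-.
by apply: eq_bigr => c _; rewrite (U_col0 c (Ordinal k_gt0)) ?mul1r.
Qed.

Lemma Jmx_mul_centered :
  (forall x, sigma j x = (m j)%:R^-1) -> J *m (U - A) = 0.
Proof.
move=> sigma_unif; apply/matrixP => a b.
have k_gt0 : (0 < m j)%N by apply: leq_ltn_trans (ltn_ord a).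
rewrite !mxE; under eq_bigr => c _ do rewrite !mxE mulrBr.
rewrite sumrB sum_ord_inv_const // -(sum_sigma_U b) -sumrB big1 // => c _.
by rewrite sigma_unif subrr.
Qed.

Lemma centered_mul_Jdiag : (U - A) *m Jd = 0.
Proof.
apply/matrixP => a b; rewrite !mxE big1 // => c _; rewrite !mxE.
case: eqP => [c0 | _]; last by rewrite mulr0.
by rewrite U_col0 // subrr mul0r.
Qed.

Hypothesis sum_sigma : \sum_x sigma j x = 1.

Lemma Amx_centered_orth : A^T *m D *m (U - A) = 0.
Proof.
apply/matrixP => a b; rewrite Dmx_formE mxE; under eq_bigr => c _ do rewrite !mxE.
transitivity (\sum_c (e0 a * (sigma j c * U c b) - e0 a * e0 b * sigma j c)).
  by apply: eq_bigr => c _; ring.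
by rewrite sumrB -!mulr_sumr sum_sigma sum_sigma_U; ring.
Qed.

Lemma centered_Amx_orth : (U - A)^T *m D *m A = 0.
Proof.
apply/matrixP => a b; rewrite Dmx_formE mxE; under eq_bigr => c _ do rewrite !mxE.
transitivity (\sum_c (e0 b * (sigma j c * U c a) - e0 a * e0 b * sigma j c)).
  by apply: eq_bigr => c _; ring.
by rewrite sumrB -!mulr_sumr sum_sigma sum_sigma_U; ring.
Qed.

Lemma centered_gram : (U - A)^T *m D *m (U - A) = 1%:M - Jd.
Proof.
apply/matrixP => a b.
have UU : \sum_c U c a * sigma j c * U c b = (a == b)%:R.
  by rewrite -Dmx_formE U_orthonormal mxE.
rewrite Dmx_formE [RHS]mxE [(- Jd) a b]mxE JdiagE [(1%:M : 'M[R]_(m j)) a b]mxE -UU.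
under eq_bigr => c _ do rewrite !mxE.
transitivity (\sum_c (U c a * sigma j c * U c b - e0 b * (sigma j c * U c a)
   - e0 a * (sigma j c * U c b) + e0 a * e0 b * sigma j c)).
  by apply: eq_bigr => c _; ring.
by rewrite big_split !sumrB /= -!mulr_sumr sum_sigma !sum_sigma_U; ring.
Qed.

End Centered.
End FactorIdentities.

Section SpectralDecomposition.
Variables (R : realType) (n : nat) (m : 'I_n -> nat).
Variables (P U Delta : forall i : 'I_n, 'M[R]_(m i)).
Variables (sigma : forall i : 'I_n, 'I_(m i) -> R) (p : 'I_n -> R).
Local Notation X := (prodIdx m).
Local Notation A := (Amx R m).

Definition Ufactor (k : 'I_n) : 'M[R]_(m k) :=
  if nat_of_ord k == 0%N then U k else U k - A k.

Definition Uterm (k : 'I_n) := kron_sel k (Inorm sigma) Ufactor A.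

Lemma Pbig_kron (x y : X) :
  Pbig p P x y = \sum_i p i * kron (kron_sel i (Imx R m) P (Jmx R m)) x y.
Proof. by apply: eq_bigr => i _; rewrite kron_atE. Qed.

Lemma Ubig_kron (x y : X) : Ubig sigma U x y = \sum_k 1 * kron (Uterm k) x y.
Proof. by apply: eq_bigr => k _; rewrite mul1r (kron_atE _ _ Ufactor). Qed.

Lemma Deltabig_kron (x y : X) :
  Deltabig p Delta x y = \sum_i p i * kron (kron_sel i (Imx R m) Delta (Jdiag R m)) x y.
Proof. by apply: eq_bigr => i _; rewrite kron_atE. Qed.

Section Eigen.
Hypotheses (P_stoch : forall i, stochastic (P i))
  (sigma_unif : forall i : 'I_n, (0 < i)%N -> forall x, sigma i x = (m i)%:R^-1)
  (Delta_diag : forall i, is_diag_mx (Delta i))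
  (PU_UDelta : forall i, P i *m U i = U i *m Delta i)
  (U_orthonormal : forall i, (U i)^T *m Dmx sigma i *m U i = 1%:M)
  (U_col0 : forall i x y, nat_of_ord y = 0%N -> U i x y = 1)
  (Delta00 : forall i y, nat_of_ord y = 0%N -> Delta i y y = 1).

Lemma P_mul_Amx i : P i *m A i = A i *m Delta i.
Proof. exact: stochastic_mul_Amx (P_stoch i) (Delta_diag i) (Delta00 i). Qed.

Lemma Ufactor_eigen k : P k *m Ufactor k = Ufactor k *m Delta k.
Proof.
rewrite /Ufactor; case: eqP => _; first exact: PU_UDelta.
by rewrite mulmxBr mulmxBl PU_UDelta P_mul_Amx.
Qed.

Lemma eigen_factor_commute (i k j : 'I_n) : (k <= i)%N ->
  kron_sel i (Imx R m) P (Jmx R m) j *m Uterm k j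
  = Uterm k j *m kron_sel i (Imx R m) Delta (Jdiag R m) j.
Proof.
move=> le_ki; rewrite /Uterm.
case: (ltngtP j i) => [lt_ji | lt_ij | /val_inj eq_ji]; last first.
- subst j; rewrite !kron_sel_id.
  case: (ltngtP i k) => [lt_ik | lt_ki | /val_inj ->]; last by rewrite kron_sel_id Ufactor_eigen.
    by move: le_ki; rewrite leqNgt lt_ik.
  by rewrite kron_sel_gt // P_mul_Amx.
- have lt_kj : (k < j)%N by apply: leq_ltn_trans lt_ij.
  by rewrite !kron_sel_gt // Jmx_mul_Amx.
- by rewrite !(kron_sel_lt lt_ji) /Imx mul1mx mulmx1.
Qed.

Lemma eigen_term (i k : 'I_n) (x y : X) :
  kron (fun j => kron_sel i (Imx R m) P (Jmx R m) j *m Uterm k j) x y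
  = kron (fun j => Uterm k j *m kron_sel i (Imx R m) Delta (Jdiag R m) j) x y.
Proof.
case: (ltnP i k) => [lt_ik | le_ki]; last first.
  by apply: eq_bigr => j _; rewrite eigen_factor_commute.
have k_gt0 : (0 < k)%N := leq_ltn_trans (leq0n i) lt_ik.
transitivity (0 : R); [apply: (kron_eq0 k) | symmetry; apply: (kron_eq0 k)];
  rewrite /= (kron_sel_gt lt_ik) /Uterm kron_sel_id /Ufactor (negPf (lt0n_neq0 k_gt0)).
  exact: Jmx_mul_centered (U_orthonormal k) (U_col0 k) (sigma_unif k k_gt0).
exact: centered_mul_Jdiag (U_col0 k).
Qed.

Lemma Ubig_eigen (x y : X) :
  mulX (Pbig p P) (Ubig sigma U) x y = mulX (Ubig sigma U) (Deltabig p Delta) x y.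
Proof.
rewrite (mulX_kron_sums Pbig_kron Ubig_kron) (mulX_kron_sums Ubig_kron Deltabig_kron).
rewrite [RHS]exchange_big; apply: eq_bigr => i _; apply: eq_bigr => k _.
by rewrite mulr1 mul1r eigen_term.
Qed.

End Eigen.

Section Orthonormal.
Hypotheses (sigma_gt0 : forall i x, 0 < sigma i x)
  (sum_sigma : forall i, \sum_x sigma i x = 1)
  (U_orthonormal : forall i, (U i)^T *m Dmx sigma i *m U i = 1%:M)
  (U_col0 : forall i x y, nat_of_ord y = 0%N -> U i x y = 1).

Local Notation gram k k' j := ((Uterm k j)^T *m Dmx sigma j *m Uterm k' j).

Lemma gram_term_offdiag (k k' : 'I_n) (x y : X) :
  k != k' -> kron (fun j => gram k k' j) x y = 0.
Proof.
case: (ltngtP k k') => [lt_kk' | lt_k'k | /val_inj ->]; last by rewrite eqxx.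
  move=> _; apply: (kron_eq0 k'); rewrite /= /Uterm (kron_sel_gt lt_kk') kron_sel_id.
  rewrite /Ufactor (negPf (lt0n_neq0 (leq_ltn_trans (leq0n k) lt_kk'))).
  exact: Amx_centered_orth (U_orthonormal k') (U_col0 k') (sum_sigma k').
move=> _; apply: (kron_eq0 k); rewrite /= /Uterm (kron_sel_gt lt_k'k) kron_sel_id.
rewrite /Ufactor (negPf (lt0n_neq0 (leq_ltn_trans (leq0n k') lt_k'k))).
exact: centered_Amx_orth (U_orthonormal k) (U_col0 k) (sum_sigma k).
Qed.

Lemma gram_diag (k j : 'I_n) :
  gram k k j = if (j < k)%N then 1%:M else if (k < j)%N then Jdiag R m j
               else if nat_of_ord k == 0%N then 1%:M else 1%:M - Jdiag R m j.
Proof.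
rewrite /Uterm; case: (ltngtP j k) => [lt_jk | lt_kj | /val_inj eq_jk].
- by rewrite !(kron_sel_lt lt_jk) (Inorm_orthonormal (sigma_gt0 j)).
- by rewrite !(kron_sel_gt lt_kj) (Amx_gram (sum_sigma j)).
subst j; rewrite kron_sel_id /Ufactor; case: eqP => _; first exact: U_orthonormal.
exact: centered_gram (U_orthonormal k) (U_col0 k) (sum_sigma k).
Qed.

Lemma Ubig_orthonormal (x y : X) : (0 < n)%N ->
  mulX (mulX (trX (Ubig sigma U)) (Dbig sigma)) (Ubig sigma U) x y = idX x y.
Proof.
move=> n_gt0.
have UT_kron x' y' : trX (Ubig sigma U) x' y'
    = \sum_k 1 * kron (fun j => (Uterm k j)^T) x' y'.
  by rewrite /trX Ubig_kron; apply: eq_bigr => k _; congr (_ * _); exact: kron_trX.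
have D_kron x' y' : Dbig sigma x' y' = \sum_(u < 1) 1 * kron (Dmx sigma) x' y'.
  by rewrite big_ord1 mul1r.
have UTD_kron x' y' : mulX (trX (Ubig sigma U)) (Dbig sigma) x' y'
    = \sum_k 1 * kron (fun j => (Uterm k j)^T *m Dmx sigma j) x' y'.
  by rewrite (mulX_kron_sums UT_kron D_kron); apply: eq_bigr => k _; rewrite big_ord1 mulr1.
rewrite (mulX_kron_sums UTD_kron Ubig_kron).
transitivity (\sum_k kron (fun j => gram k k j) x y).
  apply: eq_bigr => k _; rewrite (bigD1 k) //= big1 ?addr0 ?mul1r // => k' k'_neq_k.
  by rewrite gram_term_offdiag ?mulr0 // eq_sym.
rewrite idX_kron /kron -(sum_prod_telescope
  (fun j => (1%:M : 'M[R]_(m j)) (x j) (y j)) (fun j => Jdiag R m j (x j) (y j)) n_gt0).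
apply: eq_bigr => k _; apply: eq_bigr => j _; rewrite gram_diag.
do 3!case: ifP => _ //; rewrite mxE; congr (_ + _); exact: mxE.
Qed.

End Orthonormal.
End SpectralDecomposition.

Theorem corollary6p2 (R : realType) (n : nat) (m : 'I_n -> nat)
    (P : forall i : 'I_n, 'M[R]_(m i)) (sigma : forall i : 'I_n, 'I_(m i) -> R)
    (p : 'I_n -> R) (U Delta : forall i : 'I_n, 'M[R]_(m i)) :
  (forall i, stochastic (P i)) ->
  (forall i, irreducible (P i)) ->
  (forall i, detailed_balance (P i) (sigma i)) ->
  (forall i x, 0 < sigma i x) ->
  (forall i, \sum_x sigma i x = 1) ->
  (forall (i : 'I_n), (0 < i)%N -> forall x, sigma i x = (m i)%:R^-1) ->
  (forall i, 0 < p i) ->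
  \sum_i p i = 1 ->
  (forall i, is_diag_mx (Delta i)) ->
  (forall i, P i *m U i = U i *m Delta i) ->
  (forall i, (U i)^T *m Dmx sigma i *m U i = 1%:M) ->
  (forall i x y, nat_of_ord y = 0%N -> U i x y = 1) ->
  (forall i y, nat_of_ord y = 0%N -> Delta i y y = 1) ->
  (forall x y, mulX (Pbig p P) (Ubig sigma U) x y
               = mulX (Ubig sigma U) (Deltabig p Delta) x y) /\
  (forall x y, mulX (mulX (trX (Ubig sigma U)) (Dbig sigma)) (Ubig sigma U) x y
               = idX x y).
Proof.
move=> P_stoch _ _ sigma_gt0 sum_sigma sigma_unif _ sum_p Delta_diag PU_UDelta
  U_orthonormal U_col0 Delta00.
have n_gt0 : (0 < n)%N.
  have [n0|//] := posnP n; move: sum_p; rewrite big1 => [/esym/eqP|i _].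
    by rewrite oner_eq0.
  by have := leq_trans (ltn_ord i) (eq_leq n0).
split=> x y; first exact: Ubig_eigen.
exact: Ubig_orthonormal.
Qed.
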